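(* For any finite poset $P$ of dimension $2$, either $sat^*([k]^2,P)=O(1)$ or $sat^*([k]^2,P)=\Theta(k)$ (as $k\to\infty$).
   Context: $[k]^2$ is ordered coordinatewise. The dimension of a poset $P$ is the least $d$ such that there are $d$ linear orders (permutations) $\pi_1,\dots,\pi_d$ of $P$ with $p<_Pq$ iff $\pi_i(p)<\pi_i(q)$ for all $i$. For posets $P,R$, $P$ is a strong subposet of $R$ if there is an injection $i:P\to R$ with $p\le_P p'\iff i(p)\le_R i(p')$. A subset $F\subseteq Q$ is strong $P$-saturated if $P$ is not a strong subposet of $F$ but for every $x\in Q\setminus F$, $P$ is a strong subposet of $F\cup\{x\}$. $sat^*(Q,P)$ is the minimum size of a strong $P$-saturated subset of $Q$. *)

From mathcomp Require Import all_boot.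
Set Implicit Arguments. Unset Strict Implicit. Unset Printing Implicit Defensive.

Definition is_partial_order (T : finType) (le : rel T) : Prop :=
  reflexive le /\ antisymmetric le /\ transitive le.

Definition strict (T : finType) (le : rel T) : rel T :=
  fun p q => (p != q) && le p q.

(* d linear orders pi_1..pi_d of P (each an injective ranking T -> nat)
   with p <_P q iff pi_i(p) < pi_i(q) for all i *)
Definition realizer (T : finType) (le : rel T) (d : nat) : Prop :=
  exists pi : 'I_d -> T -> nat,
    (forall i, injective (pi i)) /\
    (forall p q, strict le p q <-> (forall i, pi i p < pi i q)).

Definition poset_dim (T : finType) (le : rel T) (d : nat) : Prop :=
  realizer le d /\ (forall d', d' < d -> ~ realizer le d').

Definition grid (k : nat) : finType := ('I_k * 'I_k)%type.
Definition grid_le (k : nat) : rel (grid k) :=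
  fun a b => (a.1 <= b.1) && (a.2 <= b.2).

Definition strong_sub (T : finType) (le : rel T) (k : nat) (F : {set grid k}) : bool :=
  [exists f : {ffun T -> grid k},
     [&& injectiveb f,
         [forall x, f x \in F] &
         [forall p, forall q, le p q == grid_le (f p) (f q)]]].

Definition strong_saturated (T : finType) (le : rel T) (k : nat) (F : {set grid k}) : bool :=
  ~~ strong_sub le F && [forall x, (x \notin F) ==> strong_sub le (x |: F)].

(* sat^*([k]^2, P): minimum size of a strong P-saturated subset of [k]^2
   (default #|[k]^2| if none existed; one always exists for nonempty P,
   e.g. any maximal P-free set) *)
Definition sat_star (T : finType) (le : rel T) (k : nat) : nat :=
  \big[minn/#|grid k|]_(F : {set grid k} | strong_saturated le F) #|F|.

From mathcomp Require Import all_boot zify.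
From Stdlib Require Import Classical.
Set Implicit Arguments. Unset Strict Implicit. Unset Printing Implicit Defensive.

(* If sat^*([k0]^2, P) < k0 for some k0, a smallest saturated family in [k0]^2 misses some
   column c and some row r.  Inserting k - k0 empty columns next to c and as many empty rows
   next to r keeps it saturated in [k]^2: a new point collapses onto a point of the old grid
   outside the family, and a copy of P through that point lifts back.  So sat^* is bounded.
   Otherwise sat^*([k]^2, P) >= k for all k, and it remains to see that a maximal P-free family
   is O(k).  A realizer of P by two linear orders turns a copy of P into an occurrence of a
   permutation pattern of size m = |P|, and the Marcus-Tardos argument bounds a pattern-free
   subset of [N]^2 by O(N): contracting b x b blocks keeps it pattern-free; a block meeting
   fewer than m columns and fewer than m rows holds at most (m-1)^2 points; and one block
   column contains at most (m-1) C(b, m) blocks meeting m columns, since m of them meeting the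
   same m columns contain the pattern (symmetrically for rows). *)

Lemma ltn_of_divn_ltn d x y : x %/ d < y %/ d -> x < y.
Proof. by apply: contraTT; rewrite -!leqNgt; apply: leq_div2r. Qed.

Lemma card_in_interval N (A : {set 'I_N}) lo n :
  {in A, forall x : 'I_N, lo <= x < lo + n} -> #|A| <= n.
Proof.
move=> A_int; rewrite cardE -(size_map val) -(size_iota lo n).
apply: uniq_leq_size; first by rewrite (map_inj_uniq val_inj) enum_uniq.
by move=> y /mapP[x]; rewrite mem_enum => /A_int x_int ->; rewrite mem_iota.
Qed.

Lemma sum_nat_of_bool (I : finType) (A : {set I}) (P : pred I) :
  \sum_(i in A) (P i : nat) = #|[set i in A | P i]|.
Proof. by rewrite -sum1dep_card big_mkcondr. Qed.

Lemma sorted_enum_ord N (A : {set 'I_N}) : sorted (fun x y : 'I_N => x < y) (enum A).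
Proof.
have -> : enum A = filter (mem A) (enum 'I_N) by rewrite enumT.
apply: sorted_filter; first exact: ltn_trans.
by have := iota_ltn_sorted 0 N; rewrite -val_enum_ord sorted_map.
Qed.

Section Ranking.
Variables (T : finType) (q : T -> nat).

Definition rank p := #|[set r | q r < q p]|.

Lemma rank_lt_card p : rank p < #|T|.
Proof.
rewrite /rank -cardsT; apply: proper_card; rewrite properE subsetT /=.
by apply/subsetPn; exists p; rewrite ?inE ?ltnn.
Qed.

Lemma rank_mono p p' : q p < q p' -> rank p < rank p'.
Proof.
move=> lt_pp'; apply: proper_card; rewrite properE; apply/andP; split.
  by apply/subsetP => r; rewrite !inE => /ltn_trans; apply.
by apply/subsetPn; exists p; rewrite !inE ?ltnn.
Qed.

Lemma exists_monotone_into N (A : {set 'I_N}) : #|T| <= #|A| ->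
  exists2 f : T -> 'I_N, forall p, f p \in A & forall p p', q p < q p' -> f p < f p'.
Proof.
move=> le_TA; have [A0 | [a0 _]] := set_0Vmem A.
  have T0 (p : T) : False by move: le_TA; rewrite A0 cards0 leqn0 => /eqP/card0_eq/(_ p).
  by exists (fun p => match T0 p with end) => p; case: (T0 p).
have rankA p : rank p < size (enum A) by rewrite -cardE (leq_trans (rank_lt_card p)).
exists (fun p => nth a0 (enum A) (rank p)) => [p | p p' lt_pp'].
  by rewrite -mem_enum mem_nth.
have ltn_trans_ord : transitive (fun x y : 'I_N => x < y) by move=> ? ? ?; apply: ltn_trans.
by apply: (sorted_ltn_nth ltn_trans_ord a0 (sorted_enum_ord A)); rewrite ?inE ?rankA ?rank_mono.
Qed.

End Ranking.

Lemma grid_le_refl k : reflexive (@grid_le k).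
Proof. by move=> u; rewrite /grid_le !leqnn. Qed.

Lemma grid_le_anti k : antisymmetric (@grid_le k).
Proof.
move=> [u1 u2] [v1 v2]; rewrite /grid_le /= => le_uv.
by apply/eqP; rewrite xpair_eqE -!val_eqE /=; lia.
Qed.

Lemma card_grid k : #|grid k| = k * k.
Proof. by rewrite card_prod card_ord. Qed.

Lemma geq_bigmin (I : finType) (P : pred I) (f : I -> nat) d i :
  P i -> \big[minn/d]_(j | P j) f j <= f i.
Proof.
move=> Pi; have : i \in index_enum I by rewrite mem_index_enum.
elim: (index_enum I) => // j r IHr; rewrite inE big_cons => /predU1P[<- | /IHr le_ri].
  by rewrite Pi geq_minl.
by case: (P j); rewrite ?geq_min ?le_ri ?orbT.
Qed.

Section SatStar.
Variables (T : finType) (le : rel T) (k : nat).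

Lemma sat_star_le (F : {set grid k}) : strong_saturated le F -> sat_star le k <= #|F|.
Proof. exact: geq_bigmin. Qed.

Lemma sat_star_le_sq : sat_star le k <= k * k.
Proof.
rewrite -card_grid; apply: (big_ind (fun s => s <= #|grid k|)) => //.
  by move=> s s' le_s _; rewrite geq_min le_s.
by move=> F _; apply: max_card.
Qed.

Lemma sat_star_attained : sat_star le k < k * k ->
  exists2 F : {set grid k}, strong_saturated le F & #|F| = sat_star le k.
Proof.
rewrite -card_grid /sat_star.
apply: (big_ind (fun s => s < #|grid k| ->
  exists2 F : {set grid k}, strong_saturated le F & #|F| = s)).
- by rewrite ltnn.
- by move=> s s' IHs IHs'; rewrite /minn; case: ifP => _; [apply: IHs | apply: IHs'].
- by move=> F satF _; exists F.
Qed.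

End SatStar.

Lemma strong_sub_embed (T : finType) (le : rel T) k k' (A : {set grid k}) (B : {set grid k'})
    (h : grid k -> grid k') :
  {in A &, forall u v, grid_le (h u) (h v) = grid_le u v} -> {in A, forall u, h u \in B} ->
  strong_sub le A -> strong_sub le B.
Proof.
move=> h_le hB /existsP[f /and3P[/injectiveP f_inj /forallP fA /forallP f_le]].
apply/existsP; exists [ffun p => h (f p)]; apply/and3P; split.
- apply/injectiveP => p p'; rewrite !ffunE => eq_h; apply: f_inj; apply: grid_le_anti.
  by rewrite -!h_le ?fA // eq_h grid_le_refl.
- by apply/forallP => p; rewrite ffunE hB.
- apply/forallP => p; apply/forallP => p'; rewrite !ffunE h_le ?fA //.
  exact: forallP (f_le p) p'.
Qed.

Lemma maximal_free_saturated (T : finType) (le : rel T) k : 0 < #|T| ->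
  exists F : {set grid k}, strong_saturated le F.
Proof.
move=> /card_gt0P[p0 _].
have free0 : ~~ strong_sub le (set0 : {set grid k}).
  by apply/existsP => -[f /and3P[_ /forallP/(_ p0)]]; rewrite inE.
have [F freeF F_max] :=
  @arg_maxnP _ set0 (fun F => ~~ strong_sub le F) (fun F : {set grid k} => #|F|) free0.
exists F; rewrite /strong_saturated freeF; apply/forallP => x; apply/implyP => x_new.
by apply: contraT => /F_max /=; rewrite cardsU1 x_new add1n ltnn.
Qed.

Lemma realizer1_of_card_le1 (T : finType) (le : rel T) : #|T| <= 1 -> realizer le 1.
Proof.
move=> le1; have T_eq (p p' : T) : p = p' by apply: (card_le1_eqP le1).
exists (fun _ _ => 0); split=> [i p p' _ | p p'].
  exact: T_eq.
by rewrite /strict (T_eq p p') eqxx; split=> // /(_ ord0).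
Qed.

Section SaturatedImage.
Variables (T : finType) (le : rel T) (k k' : nat) (F : {set grid k}).
Variables (phi : grid k -> grid k') (psi : grid k' -> grid k).
Hypothesis le_phi : {in F, forall u a, grid_le a (phi u) = grid_le (psi a) u}.
Hypothesis phi_le : {in F, forall u a, grid_le (phi u) a = grid_le u (psi a)}.
Hypothesis psiK : forall a, psi a \in F -> phi (psi a) = a.

Lemma phiK : {in F, cancel phi psi}.
Proof. by move=> u uF; apply: grid_le_anti; rewrite -le_phi // -phi_le // grid_le_refl. Qed.

Lemma phi_mono : {in F &, forall u v, grid_le (phi u) (phi v) = grid_le u v}.
Proof. by move=> u v uF vF; rewrite phi_le // phiK. Qed.

Lemma strong_saturated_image : strong_saturated le F -> strong_saturated le (phi @: F).
Proof.
case/andP=> freeF /forallP satF; apply/andP; split.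
  apply: contra freeF; apply: (strong_sub_embed (h := psi)).
    by move=> _ _ /imsetP[u uF ->] /imsetP[v vF ->]; rewrite !phiK // phi_mono.
  by move=> _ /imsetP[u uF ->]; rewrite phiK.
apply/forallP => x; apply/implyP => x_new.
have psix_new : psi x \notin F.
  by apply: contra x_new => psixF; rewrite -(psiK psixF) imset_f.
(* a copy of P through the new point [psi x] lifts to one through [x] *)
have := implyP (satF (psi x)) psix_new.
apply: (strong_sub_embed (h := fun u => if u == psi x then x else phi u)); last first.
  by move=> u; rewrite !in_setU1; case: eqP => [_|_ /= uF]; rewrite ?eqxx ?imset_f ?orbT.
move=> u v; rewrite !in_setU1.
case: (eqVneq u (psi x)) => [->|_] /= uF; case: (eqVneq v (psi x)) => [->|_] /= vF.
- by rewrite !grid_le_refl.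
- by rewrite le_phi.
- by rewrite phi_le.
- by rewrite phi_mono.
Qed.

End SaturatedImage.

Section Stretch.
Variables (n d : nat) (c : 'I_n).

Fact stretch_subproof (i : 'I_n) : (if i <= c then i : nat else i + d) < n + d.
Proof. by have := ltn_ord i; case: ifP => ?; lia. Qed.

Definition stretch (i : 'I_n) : 'I_(n + d) := Ordinal (stretch_subproof i).

Fact squash_subproof (a : 'I_(n + d)) :
  (if a <= c then a : nat else if a <= c + d then c : nat else a - d) < n.
Proof. by have := ltn_ord a; have := ltn_ord c; repeat case: ifP => ?; lia. Qed.

Definition squash (a : 'I_(n + d)) : 'I_n := Ordinal (squash_subproof a).

Lemma le_stretch i (a : 'I_(n + d)) : i != c -> (a <= stretch i) = (squash a <= i).
Proof. by rewrite -val_eqE /=; repeat case: ifP => ?; lia. Qed.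

Lemma stretch_le i (a : 'I_(n + d)) : i != c -> (stretch i <= a) = (i <= squash a).
Proof. by rewrite -val_eqE /=; repeat case: ifP => ?; lia. Qed.

Lemma squashK a : squash a != c -> stretch (squash a) = a.
Proof. by rewrite -val_eqE => ne; apply: val_inj; move: ne => /=; repeat case: ifP => ?; lia. Qed.

End Stretch.

Lemma exists_missed_coord k (F : {set grid k}) (pr : grid k -> 'I_k) : #|F| < k ->
  exists c : 'I_k, {in F, forall u, pr u != c}.
Proof.
move=> small; have : ~~ ([set: 'I_k] \subset pr @: F).
  apply: contraL small => /subset_leq_card; rewrite cardsT card_ord -leqNgt.
  by move/leq_trans; apply; apply: leq_imset_card.
case/subsetPn => c _ c_out; exists c => u uF.
by apply: contra c_out => /eqP <-; apply: imset_f.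
Qed.

Lemma sat_star_le_of_small (T : finType) (le : rel T) k0 k :
  sat_star le k0 < k0 -> k0 <= k -> sat_star le k <= sat_star le k0.
Proof.
move=> small /subnKC <-; move: (k - k0) => d.
have [F satF F_card] : exists2 F : {set grid k0}, strong_saturated le F & #|F| = sat_star le k0.
  by apply: sat_star_attained; rewrite (leq_trans small) // leq_pmulr // (leq_ltn_trans _ small).
have small_F : #|F| < k0 by rewrite F_card.
have [c cF] := exists_missed_coord (fun u => u.1) small_F.
have [r rF] := exists_missed_coord (fun u => u.2) small_F.
(* insert [d] empty columns after column [c] and [d] empty rows after row [r] *)
pose phi (u : grid k0) : grid (k0 + d) := (stretch d c u.1, stretch d r u.2).
pose psi (a : grid (k0 + d)) : grid k0 := (squash c a.1, squash r a.2).
have le_phi : {in F, forall u a, grid_le a (phi u) = grid_le (psi a) u}.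
  by move=> u uF a; rewrite /grid_le /= !le_stretch ?cF ?rF.
have phi_le : {in F, forall u a, grid_le (phi u) a = grid_le u (psi a)}.
  by move=> u uF a; rewrite /grid_le /= !stretch_le ?cF ?rF.
have psiK a : psi a \in F -> phi (psi a) = a.
  by case: a => a1 a2 /[dup] /cF c_a1 /rF r_a2; rewrite /phi /= !squashK.
apply: leq_trans (sat_star_le (strong_saturated_image le_phi phi_le psiK satF)) _.
by rewrite -F_card leq_imset_card.
Qed.

Definition occurs_along (T : finType) (q1 q2 : T -> nat) N (c1 c2 : 'I_N * 'I_N -> 'I_N)
    (S : {set 'I_N * 'I_N}) : Prop :=
  exists2 g : T -> 'I_N * 'I_N, forall p, g p \in S &
    forall p p', (q1 p < q1 p' -> c1 (g p) < c1 (g p')) /\ (q2 p < q2 p' -> c2 (g p) < c2 (g p')).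

Definition occurs (T : finType) (q1 q2 : T -> nat) N (S : {set 'I_N * 'I_N}) : Prop :=
  occurs_along q1 q2 (fun u => u.1) (fun u => u.2) S.

Lemma leq_homo_ltn_inj (T : eqType) (q f : T -> nat) : injective q ->
  (forall p p', q p < q p' -> f p < f p') -> forall p p', p != p' -> (f p <= f p') = (q p < q p').
Proof.
move=> q_inj f_mono p p' ne; case: ltngtP => [/f_mono/ltnW // | /f_mono | /q_inj eq_pp'].
- by move=> lt; rewrite leqNgt lt.
- by rewrite eq_pp' eqxx in ne.
Qed.

Lemma strong_sub_of_occurs (T : finType) (le : rel T) (pi : 'I_2 -> T -> nat) k (F : {set grid k}) :
  reflexive le -> (forall i, injective (pi i)) ->
  (forall p q, strict le p q <-> (forall i, pi i p < pi i q)) ->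
  occurs (pi ord0) (pi ord_max) F -> strong_sub le F.
Proof.
move=> le_refl pi_inj pi_real [g gF g_mono].
have g_le p p' : p != p' ->
    grid_le (g p) (g p') = (pi ord0 p < pi ord0 p') && (pi ord_max p < pi ord_max p').
  move=> ne; rewrite /grid_le.
  rewrite (leq_homo_ltn_inj (pi_inj ord0) (fun p p' => (g_mono p p').1)) //.
  by rewrite (leq_homo_ltn_inj (pi_inj ord_max) (fun p p' => (g_mono p p').2)).
have strictE p p' : strict le p p' = (pi ord0 p < pi ord0 p') && (pi ord_max p < pi ord_max p').
  apply/idP/andP => [/pi_real pi_lt | [lt0 lt1]]; first by rewrite !pi_lt.
  apply/pi_real => i; have [-> | ->] : i = ord0 \/ i = ord_max.
    by case: i => -[|[|//]] ?; [left | right]; apply: val_inj.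
  - exact: lt0.
  - exact: lt1.
apply/existsP; exists [ffun p => g p]; apply/and3P; split.
- apply/injectiveP => p p'; rewrite !ffunE => eq_g; apply/eqP; apply: contraT => ne.
  have ne' : p' != p by rewrite eq_sym.
  move: (g_le p p' ne) (g_le p' p ne'); rewrite eq_g grid_le_refl.
  by move=> /esym/andP[lt _] /esym/andP[lt' _]; move: (ltn_trans lt lt'); rewrite ltnn.
- by apply/forallP => p; rewrite ffunE gF.
apply/forallP => p; apply/forallP => p'; rewrite !ffunE.
have [<- | ne] := eqVneq p p'; first by rewrite le_refl grid_le_refl.
by rewrite g_le // -strictE /strict ne.
Qed.

Definition mt_constant m b := (2 * (b * b) * (m.-1 * 'C(b, m))).+1.

Section Blocks.
Variables (T : finType) (N b : nat).
Hypothesis b_gt0 : 0 < b.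
Local Notation U := ('I_N * 'I_N)%type.
Local Notation m := #|T|.

Definition block_coord (x : 'I_N) : 'I_N := Ordinal (leq_ltn_trans (leq_div x b) (ltn_ord x)).
Definition block (u : U) : U := (block_coord u.1, block_coord u.2).
Definition fiber (S : {set U}) beta := [set u in S | block u == beta].
Definition wide (c : U -> 'I_N) S beta := m <= #|c @: fiber S beta|.

Lemma card_block_line (X : nat) : #|[set x : 'I_N | x %/ b == X]| <= b.
Proof.
apply: (@card_in_interval _ _ (X * b)) => x; rewrite inE => /eqP x_X.
by move: (divn_eq x b) (ltn_pmod x b_gt0); rewrite x_X; lia.
Qed.

(* [(c1, c2)] is either [(fst, snd)] or [(snd, fst)]; the second instance handles rows. *)
Section Coordinates.
Variables (q1 q2 : T -> nat) (c1 c2 : U -> 'I_N).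
Hypothesis c1_block : forall u, c1 (block u) = c1 u %/ b :> nat.
Hypothesis c2_block : forall u, c2 (block u) = c2 u %/ b :> nat.
Hypothesis c12_inj : forall u v, c1 u = c1 v -> c2 u = c2 v -> u = v.
Local Notation occurs := (occurs_along q1 q2 c1 c2).

Lemma occurs_block (S : {set U}) : occurs (block @: S) -> occurs S.
Proof.
case=> g gS g_mono.
have /fin_all_exists[h hP] : forall p, exists u, (u \in S) && (block u == g p).
  by move=> p; have /imsetP[u uS ->] := gS p; exists u; rewrite uS eqxx.
exists h => [p | p p']; first by case/andP: (hP p).
move: (hP p) (hP p') (g_mono p p') => /andP[_ /eqP <-] /andP[_ /eqP <-].
rewrite !c1_block !c2_block => -[lt1 lt2].
by split=> [/lt1 | /lt2]; apply: ltn_of_divn_ltn.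
Qed.

Lemma occurs_of_block_grid (S : {set U}) (A Ys : {set 'I_N}) :
  m <= #|A| -> m <= #|Ys| ->
  (forall a Y, a \in A -> Y \in Ys -> exists2 u, u \in S & c1 u = a /\ c2 u %/ b = Y) ->
  occurs S.
Proof.
move=> m_A m_Ys AYs_S.
have [f1 f1A f1_mono] := exists_monotone_into q1 m_A.
have [f2 f2Ys f2_mono] := exists_monotone_into q2 m_Ys.
have /fin_all_exists[g gP] : forall p, exists u, [/\ u \in S, c1 u = f1 p & c2 u %/ b = f2 p].
  by move=> p; have [u uS [c1u c2u]] := AYs_S _ _ (f1A p) (f2Ys p); exists u.
exists g => [p | p p']; first by case: (gP p).
have [_ -> g2] := gP p; have [_ -> g2'] := gP p'.
by split=> [/f1_mono // | /f2_mono]; rewrite -g2 -g2'; apply: ltn_of_divn_ltn.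
Qed.

Definition chosen_cols (S : {set U}) beta : {set 'I_N} :=
  odflt set0 [pick A : {set 'I_N} | (A \subset c1 @: fiber S beta) && (#|A| == m)].

Lemma chosen_colsP (S : {set U}) beta : wide c1 S beta ->
  chosen_cols S beta \subset c1 @: fiber S beta /\ #|chosen_cols S beta| = m.
Proof.
rewrite /chosen_cols => wide_beta; case: pickP => [A /andP[A_sub /eqP A_card] | no_A] //=.
have : 0 < 'C(#|c1 @: fiber S beta|, m) by rewrite bin_gt0.
by rewrite -cards_draws => /card_gt0P[A]; rewrite inE no_A.
Qed.

Definition wide_blocks_line (S : {set U}) (X : 'I_N) :=
  [set beta in block @: S | wide c1 S beta && (c1 beta == X)].

(* [m] such blocks in block column [X] form an [m x m] grid through the columns [A] *)
Lemma card_blocks_sharing_cols (S : {set U}) X A : ~ occurs S ->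
  #|[set beta in wide_blocks_line S X | chosen_cols S beta == A]| < m.
Proof.
move=> no_occ; rewrite ltnNge; apply/negP => m_Bs; apply: no_occ.
set Bs := [set beta in _ | _] in m_Bs.
have BsP beta : beta \in Bs ->
    [/\ wide c1 S beta, c1 beta = X & chosen_cols S beta = A].
  by rewrite !inE => /andP[/and3P[_ ? /eqP ?] /eqP ?].
apply: (occurs_of_block_grid (A := A) (Ys := c2 @: Bs)).
- have [Bs0 | [beta /BsP[wide_beta _ <-]]] := set_0Vmem Bs.
    by move: m_Bs; rewrite Bs0 cards0 leqn0 => /eqP ->.
  by rewrite (chosen_colsP wide_beta).2.
- rewrite card_in_imset // => beta beta' /BsP[_ X_beta _] /BsP[_ X_beta' _].
  by apply: c12_inj; rewrite X_beta X_beta'.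
move=> a _ a_A /imsetP[beta /BsP[wide_beta _ cols_beta] ->].
have /subsetP/(_ a) := (chosen_colsP wide_beta).1.
rewrite cols_beta => /(_ a_A) /imsetP[u]; rewrite inE => /andP[uS /eqP block_u] ->.
by exists u; rewrite // -c2_block block_u.
Qed.

Lemma card_wide_blocks_line (S : {set U}) X : ~ occurs S ->
  #|wide_blocks_line S X| <= m.-1 * 'C(b, m).
Proof.
move=> no_occ; set W := wide_blocks_line S X; set line := [set x : 'I_N | x %/ b == X].
have cols_line beta : beta \in W -> chosen_cols S beta \subset line.
  rewrite !inE => /and3P[_ wide_beta /eqP X_beta].
  apply: subset_trans (chosen_colsP wide_beta).1 _; apply/subsetP => x /imsetP[u].
  by rewrite !inE => /andP[_ /eqP block_u] ->; rewrite -c1_block block_u X_beta.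
rewrite -[#|W|]sum1_card (partition_big_imset (chosen_cols S)) /= mulnC.
apply: (@leq_trans (\sum_(A in chosen_cols S @: W) m.-1)).
  apply: leq_sum => A _; rewrite sum1dep_card.
  by rewrite -ltnS (leq_trans (card_blocks_sharing_cols X A no_occ)) ?leqSpred.
rewrite sum_nat_const leq_mul2r; apply/orP; right.
apply: leq_trans (leq_bin2l m (card_block_line X)); rewrite -cards_draws.
apply/subset_leq_card/subsetP => B /imsetP[beta W_beta ->].
rewrite inE cols_line //=; have := W_beta; rewrite inE => /and3P[_ wide_beta _].
by rewrite (chosen_colsP wide_beta).2.
Qed.

Lemma card_wide_blocks (S : {set U}) n : ~ occurs S -> {in block @: S, forall beta, c1 beta < n} ->
  #|[set beta in block @: S | wide c1 S beta]| <= n * (m.-1 * 'C(b, m)).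
Proof.
move=> no_occ c1_lt; set W := [set beta in _ | _].
rewrite -[#|W|]sum1_card (partition_big_imset c1) /=.
apply: (@leq_trans (\sum_(X in c1 @: W) (m.-1 * 'C(b, m)))).
  apply: leq_sum => X _; rewrite sum1dep_card; apply: leq_trans (card_wide_blocks_line X no_occ).
  by apply/subset_leq_card/subsetP => beta; rewrite !inE andbA.
rewrite sum_nat_const leq_mul2r; apply/orP; right.
by apply: (@card_in_interval _ _ 0) => x /imsetP[beta]; rewrite inE => /andP[/c1_lt ? _] ->.
Qed.

End Coordinates.

Lemma card_fiber (S : {set U}) beta :
  #|fiber S beta| <=
    m.-1 * m.-1 + b * b * wide (fun u => u.1) S beta + b * b * wide (fun u => u.2) S beta.
Proof.
set F := fiber S beta.
have F_sub : F \subset setX ((fun u => u.1) @: F) ((fun u => u.2) @: F).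
  by apply/subsetP => u uF; rewrite inE !imset_f.
have line1 : #|(fun u => u.1) @: F| <= b.
  apply: leq_trans (card_block_line beta.1); apply/subset_leq_card/subsetP => x /imsetP[u].
  by rewrite !inE => /andP[_ /eqP <-] ->.
have line2 : #|(fun u => u.2) @: F| <= b.
  apply: leq_trans (card_block_line beta.2); apply/subset_leq_card/subsetP => x /imsetP[u].
  by rewrite !inE => /andP[_ /eqP <-] ->.
have := subset_leq_card F_sub; rewrite cardsX /wide -/F.
move: line1 line2; set x := #|_ @: F|; set y := #|_ @: F| => x_b y_b F_xy.
have xy_bb := leq_mul x_b y_b.
have xy_mm : x < m -> y < m -> x * y <= m.-1 * m.-1 by move=> ? ?; apply: leq_mul; lia.
move: (x * y) (b * b) (m.-1 * m.-1) xy_bb xy_mm F_xy => xy bb mm.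
by case: (leqP m x); case: (leqP m y); lia.
Qed.

Lemma card_by_blocks (S : {set U}) :
  #|S| <= #|block @: S| * (m.-1 * m.-1)
          + b * b * #|[set beta in block @: S | wide (fun u => u.1) S beta]|
          + b * b * #|[set beta in block @: S | wide (fun u => u.2) S beta]|.
Proof.
rewrite -sum_nat_const -!sum_nat_of_bool !big_distrr -!big_split /=.
rewrite -[#|S|]sum1_card (partition_big_imset block) /=.
by apply: leq_sum => beta _; rewrite sum1dep_card card_fiber.
Qed.

Lemma card_pattern_free_pow (q1 q2 : T -> nat) j (S : {set U}) : m.-1 * m.-1 < b ->
  {in S, forall u : U, u.1 < b ^ j /\ u.2 < b ^ j} -> ~ occurs q1 q2 S ->
  #|S| <= mt_constant m b * b ^ j.
Proof.
move=> b_large; elim: j S => [|j IHj] S S_lt no_occ.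
  rewrite expn0 muln1 in S_lt *; apply: (@leq_trans 1) => //.
  apply/card_le1_eqP => -[u1 u2] [v1 v2] /S_lt /= [? ?] /S_lt /= [? ?].
  by apply/eqP; rewrite xpair_eqE -!val_eqE /=; lia.
set B := block @: S.
have B_lt : {in B, forall beta : U, beta.1 < b ^ j /\ beta.2 < b ^ j}.
  by move=> _ /imsetP[u /S_lt[u1 u2] ->] /=; rewrite !ltn_divLR // -expnSr.
have no_occB : ~ occurs q1 q2 B.
  by move/(occurs_block (c1 := fun u => u.1) (c2 := fun u => u.2) (fun=> erefl) (fun=> erefl)).
have no_occT : ~ occurs_along q2 q1 (fun u => u.2) (fun u => u.1) S.
  by case=> g gS g_mono; apply: no_occ; exists g => // p p'; have [] := g_mono p p'.
have pair_inj (u v : U) : u.1 = v.1 -> u.2 = v.2 -> u = v by case: u v => [? ?] [? ?] /= -> ->.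
have wide1 := card_wide_blocks (c1 := fun u => u.1) (c2 := fun u => u.2)
  (fun=> erefl) (fun=> erefl) pair_inj no_occ (fun beta Bbeta => (B_lt beta Bbeta).1).
have wide2 := card_wide_blocks (c1 := fun u => u.2) (c2 := fun u => u.1)
  (fun=> erefl) (fun=> erefl) (fun u v e2 e1 => pair_inj u v e1 e2) no_occT
  (fun beta Bbeta => (B_lt beta Bbeta).2).
have := IHj B B_lt no_occB; have := card_by_blocks S; rewrite -/B expnS /mt_constant.
move: wide1 wide2; set K := m.-1 * 'C(b, m).
set w1 := #|[set beta in B | _]|; set w2 := #|[set beta in B | _]|.
move: (#|S|) (#|B|) (b ^ j) (m.-1 * m.-1) b_large => s nB P mm mm_b w1_le w2_le s_le nB_le.
(* with D = 2 b^2 K + 1: D P (m-1)^2 + 2 b^2 K P = D P ((m-1)^2 + 1) - P <= D P b *)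
have := leq_mul (leqnn (b * b)) w1_le; have := leq_mul (leqnn (b * b)) w2_le.
have := leq_mul nB_le (leqnn mm); have := leq_mul (leqnn ((2 * (b * b) * K).+1 * P)) mm_b.
nia.
Qed.

End Blocks.

Lemma card_pattern_free (T : finType) (q1 q2 : T -> nat) N b (S : {set 'I_N * 'I_N}) :
  1 < b -> #|T|.-1 * #|T|.-1 < b -> ~ occurs q1 q2 S -> #|S| <= mt_constant #|T| b * b * N.
Proof.
move=> b_gt1 b_large no_occ; have [N0 | N_gt0] := posnP N.
  by rewrite (leq_trans (max_card _)) // card_prod card_ord N0.
have S_lt : {in S, forall u : 'I_N * 'I_N,
    u.1 < b ^ (trunc_log b N).+1 /\ u.2 < b ^ (trunc_log b N).+1}.
  by move=> u _; rewrite !(leq_trans (ltn_ord _) (ltnW (trunc_log_ltn N b_gt1))).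
rewrite -mulnA (leq_trans (card_pattern_free_pow (ltnW b_gt1) b_large S_lt no_occ)) //.
by rewrite leq_mul2l expnS leq_mul2l trunc_logP ?orbT.
Qed.

Theorem theorem1p8 (T : finType) (le : rel T) :
  is_partial_order le -> poset_dim le 2 ->
  (exists C : nat, forall k, sat_star le k <= C) \/
  (exists c K : nat, 0 < c /\
     forall k, K <= k -> k <= c * sat_star le k /\ sat_star le k <= c * k).
Proof.
move=> [le_refl _] [[pi [pi_inj pi_real]] dim_min].
have T_gt1 : 1 < #|T|.
  by rewrite ltnNge; apply/negP => /(realizer1_of_card_le1 le); apply: dim_min.
have [[k0 small] | large] := classic (exists k0, sat_star le k0 < k0).
  left; exists (k0 * k0 + sat_star le k0) => k; have [k0_k | k_k0] := leqP k0 k.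
    by rewrite (leq_trans (sat_star_le_of_small small k0_k)) ?leq_addl.
  by rewrite (leq_trans (sat_star_le_sq le k)) // (leq_trans _ (leq_addr _ _)) // leq_mul // ltnW.
set b := #|T| * #|T|; have b_gt1 : 1 < b by rewrite /b; nia.
have b_large : #|T|.-1 * #|T|.-1 < b by rewrite /b; apply: ltn_mul; lia.
right; exists (mt_constant #|T| b * b), 0; split=> [|k _]; first by rewrite muln_gt0 (ltnW b_gt1).
split.
  have k_sat : k <= sat_star le k by rewrite leqNgt; apply/negP => lt; apply: large; exists k.
  by rewrite (leq_trans k_sat) // leq_pmull // muln_gt0 (ltnW b_gt1).
have [F satF] := maximal_free_saturated le k (ltnW T_gt1).
rewrite (leq_trans (sat_star_le satF)) // (card_pattern_free (q1 := pi ord0) (q2 := pi ord_max)) //.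
by move/(strong_sub_of_occurs le_refl pi_inj pi_real); apply/negP; case/andP: satF.
Qed.
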